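(* If $G$ is an infinite, countable, locally finite group, then the number of ends of $G$ is infinite.
   Context: A group is locally finite if every finite subset is contained in a finite subgroup. For a countable group $G$ equipped with a proper left-invariant metric, the number of ends of $G$ is the cardinality of $CF(G)\setminus G$, where $CF(X)$, for a proper metric space $X$, is the compactification induced by all continuous glacially oscillating functions $X\to[0,1]$. A glacial scale on $X$ is a sequence $\mathcal S=\{(K_i,n_i)\}_{i\ge1}$, $K_i$ bounded, $n_i\in\mathbb N$, such that for every bounded $K$ and $r>0$ there is $i$ with $K\subset K_i$, $n_i>r$; an $\mathcal S$-chain is a finite sequence $x_1,\dots,x_n$ with, for each $i\le n-1$, some $m$ with $x_i,x_{i+1}\notin K_m$ and $d(x_i,x_{i+1})\le n_m$; $f$ is glacially oscillating if for every $\epsilon>0$ there is a glacial scale $\mathcal S$ with $|f(x_1)-f(x_n)|<\epsilon$ for all $\mathcal S$-chains. *)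

From Stdlib Require Import Reals List.
Open Scope R_scope.

Definition finite_set {T : Type} (A : T -> Prop) : Prop :=
  exists l : list T, forall x, A x -> In x l.
Definition infinite_set {T : Type} (A : T -> Prop) : Prop := ~ finite_set A.

Definition countable_type (T : Type) : Prop :=
  exists f : T -> nat, forall x y, f x = f y -> x = y.

Definition is_group {G : Type} (mul : G -> G -> G) (one : G) (inv : G -> G) : Prop :=
  (forall x y z, mul x (mul y z) = mul (mul x y) z) /\
  (forall x, mul one x = x) /\ (forall x, mul x one = x) /\
  (forall x, mul (inv x) x = one) /\ (forall x, mul x (inv x) = one).

Definition is_subgroup {G : Type} (mul : G -> G -> G) (one : G) (inv : G -> G)
  (H : G -> Prop) : Prop :=
  H one /\ (forall x y, H x -> H y -> H (mul x y)) /\ (forall x, H x -> H (inv x)).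

Definition locally_finite {G : Type} (mul : G -> G -> G) (one : G) (inv : G -> G) : Prop :=
  forall s : list G, exists H : G -> Prop,
    is_subgroup mul one inv H /\ finite_set H /\ (forall x, In x s -> H x).

Definition is_metric {X : Type} (d : X -> X -> R) : Prop :=
  (forall x y, 0 <= d x y) /\ (forall x y, d x y = 0 <-> x = y) /\
  (forall x y, d x y = d y x) /\ (forall x y z, d x z <= d x y + d y z).

Definition left_invariant {G : Type} (mul : G -> G -> G) (d : G -> G -> R) : Prop :=
  forall g x y, d (mul g x) (mul g y) = d x y.

(** Proper metric on a countable (discrete) group: closed balls are finite. *)
Definition proper_metric {X : Type} (d : X -> X -> R) : Prop :=
  forall x r, finite_set (fun y => d x y <= r).

Definition bounded {X : Type} (d : X -> X -> R) (K : X -> Prop) : Prop :=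
  exists x0 r, forall y, K y -> d x0 y <= r.

Definition glacial_scale {X : Type} (d : X -> X -> R)
  (K : nat -> X -> Prop) (n : nat -> nat) : Prop :=
  (forall i, bounded d (K i)) /\
  (forall (B : X -> Prop) (r : R), bounded d B -> r > 0 ->
     exists i, (forall y, B y -> K i y) /\ INR (n i) > r).

Definition scale_link {X : Type} (d : X -> X -> R)
  (K : nat -> X -> Prop) (n : nat -> nat) (a b : X) : Prop :=
  exists m, ~ K m a /\ ~ K m b /\ d a b <= INR (n m).

(** An S-chain x_0, ..., x_N (N+1 points). *)
Definition scale_chain {X : Type} (d : X -> X -> R)
  (K : nat -> X -> Prop) (n : nat -> nat) (N : nat) (x : nat -> X) : Prop :=
  forall i, (i < N)%nat -> scale_link d K n (x i) (x (S i)).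

Definition glacially_oscillating {X : Type} (d : X -> X -> R) (f : X -> R) : Prop :=
  forall eps, eps > 0 -> exists (K : nat -> X -> Prop) (n : nat -> nat),
    glacial_scale d K n /\
    forall N x, scale_chain d K n N x -> Rabs (f (x 0%nat) - f (x N)) < eps.

Definition metric_continuous {X : Type} (d : X -> X -> R) (f : X -> R) : Prop :=
  forall x eps, eps > 0 -> exists delta, delta > 0 /\
    forall y, d x y < delta -> Rabs (f x - f y) < eps.

Definition GOfun {X : Type} (d : X -> X -> R) : Type :=
  { f : X -> R | (forall x, 0 <= f x <= 1) /\ metric_continuous d f
                 /\ glacially_oscillating d f }.

(** CF(X) is the closure of the image of the evaluation map
    e : X -> [0,1]^F, e x = (f x)_{f in F}, in the product topology. *)
Definition CF_eval {X : Type} (d : X -> X -> R) (x : X) : GOfun d -> R :=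
  fun f => proj1_sig f x.

(** p lies in the product-topology closure of e(X): every basic open
    neighbourhood (finitely many coordinates, radius eps) meets e(X). *)
Definition in_CF {X : Type} (d : X -> X -> R) (p : GOfun d -> R) : Prop :=
  (forall f, 0 <= p f <= 1) /\
  forall (fs : list (GOfun d)) (eps : R), eps > 0 ->
    exists x : X, forall f, In f fs -> Rabs (p f - CF_eval d x f) < eps.

Definition CF_remainder {X : Type} (d : X -> X -> R) : (GOfun d -> R) -> Prop :=
  fun p => in_CF d p /\ forall x : X, p <> CF_eval d x.

Definition infinitely_many_ends {X : Type} (d : X -> X -> R) : Prop :=
  infinite_set (CF_remainder d).

(** Every function on [G] is continuous (balls are finite, so the
    topology is discrete), hence [CF(G) \ G] is infinite as soon as we exhibit
    infinitely many points of the closure of the evaluation image that are not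
    evaluations.

    - Local finiteness yields an exhaustion [H_0 < H_1 < ...] of [G] by finite
      subgroups, strictly increasing, with [H_j] containing the ball of radius
      [j] about [1].  The "layers" [H_(j+1) \ H_j] are non-empty, and a step of
      length [<= m] starting outside [H_m] never leaves its layer, because it
      is right multiplication by an element of [H_m <= H_j].
    - Splitting the layers into infinitely many infinite families (via the
      Cantor pairing) gives disjoint infinite "sectors" [A_k]; each indicator
      [1_(A_k)] is glacially oscillating for the scale [(H_i, i)].
    - A free ultrafilter [U_k] containing [A_k] defines a point
      [p_k(f) = lim_(U_k) f] of [CF(G)]; it is not an evaluation since the
      indicator of a singleton is glacially oscillating, and [p_k(1_(A_l))] is
      [1] if [k = l] and [0] otherwise, so the [p_k] are pairwise distinct. *)

From Pilot Require Import Defs.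
From Stdlib Require Import Reals List Lia Lra Classical ClassicalEpsilon Cantor.
From mathcomp Require all_boot boolp classical_sets filter.
Open Scope R_scope.

Definition is_ultrafilter {T : Type} (U : (T -> Prop) -> Prop) : Prop :=
  (forall A B, U A -> U B -> U (fun x => A x /\ B x)) /\
  (forall A B : T -> Prop, (forall x, A x -> B x) -> U A -> U B) /\
  ~ U (fun _ => False) /\
  (forall A, U A \/ U (fun x => ~ A x)).

Module UltrafilterLemma.
Import all_boot boolp classical_sets filter.

Lemma ultrafilter_extension (T : Type) (F : (T -> Prop) -> Prop) :
  F (fun _ => True) ->
  (forall A B, F A -> F B -> F (fun x => A x /\ B x)) ->
  (forall A B : T -> Prop, (forall x, A x -> B x) -> F A -> F B) ->
  ~ F (fun _ => False) ->
  exists U, (forall A, F A -> U A) /\ is_ultrafilter U.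
Proof.
move=> FT FI FS F0.
have PF : ProperFilter F.
  constructor; first by move=> h; apply: F0; apply: FS h => x.
  constructor; first by apply: FS FT => x.
  - by move=> A B FA FB; apply: FS (FI _ _ FA FB) => x [].
  - by move=> A B AB; apply: FS.
have [U [UU FU]] := ultraFilterLemma PF.
exists U; split; first exact: FU.
split; first by move=> A B UA UB; apply: (filterS (P := A `&` B)) (filterI UA UB) => x [].
split; first by move=> A B AB; apply: filterS.
split; first by move=> h; apply: (filter_not_empty U); apply: filterS h => x.
by move=> A; case: (in_ultra_setVsetC A UU) => h; [left | right].
Qed.
End UltrafilterLemma.

Lemma injection_not_into_list (T : Type) (g : nat -> T) (l : list T) :
  (forall i j, g i = g j -> i = j) -> ~ (forall i, In (g i) l).
Proof.
  intros Hinj Hin.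
  assert (Hnodup : NoDup (map g (seq 0 (S (length l))))).
  { apply NoDup_map_NoDup_ForallPairs; [intros a b _ _; apply Hinj | apply seq_NoDup]. }
  assert (Hincl : incl (map g (seq 0 (S (length l)))) l).
  { intros y Hy. apply in_map_iff in Hy. destruct Hy as [i [<- _]]. apply Hin. }
  pose proof (NoDup_incl_length Hnodup Hincl) as Hlen.
  rewrite length_map, length_seq in Hlen. lia.
Qed.

Lemma infinite_of_injection (T : Type) (S : T -> Prop) (g : nat -> T) :
  (forall i, S (g i)) -> (forall i j, g i = g j -> i = j) -> infinite_set S.
Proof.
  intros HS Hinj [l Hl]. apply (injection_not_into_list T g l Hinj).
  intro i; apply Hl, HS.
Qed.

(** A free ultrafilter on an infinite set [S]: the filter of subsets
    containing all but finitely many points of [S] is proper, and any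
    ultrafilter refining it contains [S] and avoids every point. *)
Lemma free_ultrafilter_on (T : Type) (S : T -> Prop) : infinite_set S ->
  exists V, is_ultrafilter V /\ V S /\ forall x, V (fun y => y <> x).
Proof.
  intros Hinf.
  set (cofinite_in_S := fun B : T -> Prop =>
         exists l : list T, forall y, S y -> ~ In y l -> B y).
  destruct (UltrafilterLemma.ultrafilter_extension T cofinite_in_S)
    as [V [Hext HV]].
  - exists nil; auto.
  - intros B1 B2 [l1 H1] [l2 H2]. exists (l1 ++ l2). intros y Sy Hy.
    split; [apply H1 | apply H2]; auto; intro; apply Hy, in_or_app; auto.
  - intros B1 B2 Hsub [l Hl]. exists l; auto.
  - intros [l Hl]. apply Hinf. exists l. intros y Sy. apply NNPP. exact (Hl y Sy).
  - exists V. split; [exact HV | split].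
    + apply Hext. exists nil; auto.
    + intros x. apply Hext. exists (x :: nil).
      intros y _ Hy ->. apply Hy; left; reflexivity.
Qed.

Section Ultrafilters.
Variables (T : Type) (U : (T -> Prop) -> Prop).
Hypothesis HU : is_ultrafilter U.

Lemma ultrafilter_full : U (fun _ => True).
Proof.
  destruct HU as [_ [Hup [Hempty Hcompl]]].
  destruct (Hcompl (fun _ => False)) as [H | H]; [contradiction |].
  exact (Hup _ _ (fun _ _ => I) H).
Qed.

Lemma ultrafilter_inhabited (S : T -> Prop) : U S -> exists y, S y.
Proof.
  destruct HU as [_ [Hup [Hempty _]]]. intros HS.
  apply NNPP. intros Hno. apply Hempty.
  apply (Hup S); [intros x Hx; apply Hno; exists x |]; assumption.
Qed.

Definition ultra_converges (f : T -> R) (L : R) : Prop :=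
  forall eps, eps > 0 -> U (fun y => Rabs (f y - L) < eps).

(** Every [[0,1]]-valued function has a limit along an ultrafilter: the
    supremum of the levels [t] such that [f >= t] on a set of [U]. *)
Lemma ultra_limit_exists (f : T -> R) : (forall x, 0 <= f x <= 1) ->
  exists L, 0 <= L <= 1 /\ ultra_converges f L.
Proof.
  intros Hf. pose proof ultrafilter_full as Hfull.
  destruct HU as [Hinter [Hup [Hempty Hcompl]]].
  set (E := fun t => U (fun y => t <= f y)).
  assert (Hub : is_upper_bound E 1).
  { intros t Ht. destruct (Rle_dec t 1) as [h | h]; auto. exfalso. apply Hempty.
    revert Ht; apply Hup; intros y Hy; pose proof (Hf y); lra. }
  assert (HE0 : E 0) by exact (Hup _ _ (fun y _ => proj1 (Hf y)) Hfull).
  destruct (completeness E (ex_intro _ 1 Hub) (ex_intro _ 0 HE0)) as [m [Hm1 Hm2]].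
  exists m. split; [split; [exact (Hm1 _ HE0) | exact (Hm2 _ Hub)] |].
  intros eps Heps.
  assert (Hlow : U (fun y => m - eps < f y)).
  { apply NNPP. intros Hnot.
    assert (Hbound : is_upper_bound E (m - eps)).
    { intros t Ht. destruct (Rle_dec t (m - eps)) as [h | h]; auto.
      exfalso; apply Hnot. revert Ht; apply Hup; intros y Hy; lra. }
    pose proof (Hm2 _ Hbound). lra. }
  assert (Hhigh : U (fun y => f y < m + eps)).
  { destruct (Hcompl (fun y => m + eps / 2 <= f y)) as [h | h].
    - pose proof (Hm1 _ h). lra.
    - revert h; apply Hup; intros y Hy; apply Rnot_le_lt in Hy; lra. }
  generalize (Hinter _ _ Hlow Hhigh); apply Hup.
  intros y [Hy1 Hy2]; apply Rabs_def1; lra.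
Qed.

Lemma ultra_limit_of_constant (f : T -> R) (S : T -> Prop) (c L : R) :
  U S -> (forall y, S y -> f y = c) -> ultra_converges f L -> L = c.
Proof.
  intros HS Hc HL. apply NNPP. intros Hne.
  assert (Hpos : Rabs (c - L) > 0) by (apply Rabs_pos_lt; lra).
  destruct HU as [Hinter _].
  destruct (ultrafilter_inhabited _ (Hinter _ _ HS (HL _ Hpos))) as [y [Sy Hy]].
  rewrite Hc in Hy; [lra | exact Sy].
Qed.

End Ultrafilters.

(** The chosen limit of [f] along [U] (meaningful for [[0,1]]-valued [f]). *)
Definition ultra_limit {T : Type} (U : (T -> Prop) -> Prop) (f : T -> R) : R :=
  epsilon (inhabits 0) (fun L => 0 <= L <= 1 /\ ultra_converges T U f L).

Lemma ultra_limit_spec {T : Type} (U : (T -> Prop) -> Prop) (f : T -> R) :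
  is_ultrafilter U -> (forall x, 0 <= f x <= 1) ->
  0 <= ultra_limit U f <= 1 /\ ultra_converges T U f (ultra_limit U f).
Proof.
  intros HU Hf. unfold ultra_limit. apply epsilon_spec. exact (ultra_limit_exists T U HU f Hf).
Qed.

Definition indicator {X : Type} (P : X -> Prop) (y : X) : R :=
  if excluded_middle_informative (P y) then 1 else 0.

Lemma indicator_bounds {X : Type} (P : X -> Prop) y : 0 <= indicator P y <= 1.
Proof. unfold indicator; destruct excluded_middle_informative; lra. Qed.

Lemma indicator_in {X : Type} (P : X -> Prop) y : P y -> indicator P y = 1.
Proof. unfold indicator; destruct excluded_middle_informative; tauto. Qed.

Lemma indicator_out {X : Type} (P : X -> Prop) y : ~ P y -> indicator P y = 0.
Proof. unfold indicator; destruct excluded_middle_informative; tauto. Qed.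

Section ProperMetricSpace.
Variables (X : Type) (d : X -> X -> R).
Hypothesis Hmet : is_metric d.
Hypothesis Hprop : proper_metric d.

Lemma finite_bounded (x0 : X) (K : X -> Prop) : finite_set K -> Defs.bounded d K.
Proof.
  intros [l Hl]. exists x0, (fold_right (fun y acc => d x0 y + acc) 0 l).
  intros y Hy. specialize (Hl y Hy). clear Hy. induction l as [| a l IH]; simpl.
  - destruct Hl.
  - assert (Hnonneg : forall l', 0 <= fold_right (fun y acc => d x0 y + acc) 0 l').
    { induction l' as [| b l' IH']; simpl; [lra | pose proof (proj1 Hmet x0 b); lra]. }
    pose proof (proj1 Hmet x0 a). pose proof (Hnonneg l).
    destruct Hl as [<- | Hl]; [lra | pose proof (IH Hl); lra].
Qed.

Lemma separated_from_list (x : X) (l : list X) :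
  exists delta, delta > 0 /\ forall y, In y l -> y <> x -> delta <= d x y.
Proof.
  destruct Hmet as [Hpos [Hzero _]].
  induction l as [| a l [delta [Hdelta H]]].
  - exists 1. split; [lra | intros y []].
  - destruct (classic (a = x)) as [-> | Hne].
    + exists delta. split; auto. intros y [<- | Hy] Hy'; [contradiction | auto].
    + assert (Hda : d x a > 0).
      { destruct (Req_dec (d x a) 0) as [h | h];
          [apply Hzero in h; congruence | pose proof (Hpos x a); lra]. }
      exists (Rmin delta (d x a)). split; [apply Rmin_pos; lra |].
      intros y [<- | Hy] Hy'; [apply Rmin_r |].
      eapply Rle_trans; [apply Rmin_l | auto].
Qed.

(** A proper metric space is discrete, so every function is continuous. *)
Lemma proper_continuous (f : X -> R) : metric_continuous d f.
Proof.
  intros x eps Heps. destruct (Hprop x 1) as [l Hl].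
  destruct (separated_from_list x l) as [delta [Hdelta Hsep]].
  exists (Rmin delta 1). split; [apply Rmin_pos; lra |]. intros y Hy.
  assert (Hyx : y = x).
  { apply NNPP. intros Hne.
    pose proof (Rmin_l delta 1). pose proof (Rmin_r delta 1).
    pose proof (Hsep y (Hl y ltac:(lra)) Hne). lra. }
  subst y. replace (f x - f x) with 0 by ring. rewrite Rabs_R0; lra.
Qed.

Lemma balls_glacial_scale (c : X) (K : nat -> X -> Prop) :
  (forall i, Defs.bounded d (K i)) -> (forall i y, d c y <= INR i -> K i y) ->
  glacial_scale d K (fun i => i).
Proof.
  intros Hb Hball. split; [exact Hb |].
  intros B r [x0 [rho HB]] Hr.
  destruct Hmet as [_ [_ [_ Htri]]].
  destruct (INR_unbounded (Rmax (d c x0 + rho) r)) as [i Hi].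
  pose proof (Rmax_l (d c x0 + rho) r). pose proof (Rmax_r (d c x0 + rho) r).
  exists i. split; [| lra].
  intros y By. apply Hball. pose proof (Htri c x0 y). pose proof (HB y By). lra.
Qed.

Lemma link_invariant_oscillating (K : nat -> X -> Prop) (n : nat -> nat) (f : X -> R) :
  glacial_scale d K n -> (forall a b, scale_link d K n a b -> f a = f b) ->
  glacially_oscillating d f.
Proof.
  intros Hscale Hlink eps Heps. exists K, n. split; [exact Hscale |].
  intros N x Hchain.
  assert (Hconst : f (x 0%nat) = f (x N)).
  { induction N as [| N IH]; auto.
    rewrite IH by (intros i Hi; apply Hchain; lia). apply Hlink, Hchain; lia. }
  rewrite Hconst. replace (f (x N) - f (x N)) with 0 by ring. rewrite Rabs_R0; lra.
Qed.

Definition go_indicator (P : X -> Prop) (HP : glacially_oscillating d (indicator P)) : GOfun d :=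
  exist _ (indicator P) (conj (indicator_bounds P) (conj (proper_continuous _) HP)).

(** The indicator of a singleton is glacially oscillating: links far from
    [x0] never touch [x0]. *)
Lemma singleton_oscillating (x0 : X) : glacially_oscillating d (indicator (fun y => y = x0)).
Proof.
  set (ball := fun (i : nat) y => d x0 y <= INR i).
  apply (link_invariant_oscillating ball (fun i => i)).
  - apply (balls_glacial_scale x0); [intros i; exists x0, (INR i) | ]; auto.
  - intros a b [m [Ha [Hb _]]].
    assert (Hfar : forall y, ~ ball m y -> y <> x0).
    { intros y Hy ->. apply Hy. unfold ball.
      rewrite (proj2 (proj1 (proj2 Hmet) x0 x0) eq_refl). apply pos_INR. }
    rewrite !indicator_out; auto.
Qed.

Definition ultra_point (U : (X -> Prop) -> Prop) : GOfun d -> R :=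
  fun f => ultra_limit U (proj1_sig f).

Lemma ultra_point_converges (U : (X -> Prop) -> Prop) (f : GOfun d) :
  is_ultrafilter U ->
  0 <= ultra_point U f <= 1 /\ ultra_converges X U (proj1_sig f) (ultra_point U f).
Proof. intros HU. exact (ultra_limit_spec U _ HU (proj1 (proj2_sig f))). Qed.

(** Limits along a free ultrafilter give points of [CF(X) \ X]: finitely
    many coordinates are simultaneously approximated on a set of [U], and the
    singleton indicator of [x] separates the point from the evaluation at [x]. *)
Lemma free_ultra_point_remainder (U : (X -> Prop) -> Prop) :
  is_ultrafilter U -> (forall x, U (fun y => y <> x)) -> CF_remainder d (ultra_point U).
Proof.
  intros HU Hfree. split; [split |].
  - intros f. apply ultra_point_converges, HU.
  - intros fs eps Heps.
    assert (Hall : U (fun y => forall f, In f fs -> Rabs (proj1_sig f y - ultra_point U f) < eps)).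
    { pose proof HU as [Hinter [Hup _]].
      induction fs as [| f0 fs IH].
      - generalize (ultrafilter_full X U HU); apply Hup. intros y _ f [].
      - generalize (Hinter _ _ IH (proj2 (ultra_point_converges U f0 HU) eps Heps)).
        apply Hup. intros y [Hy1 Hy2] f [<- | Hf]; auto. }
    destruct (ultrafilter_inhabited X U HU _ Hall) as [x Hx]. exists x.
    intros f Hf. unfold CF_eval. rewrite Rabs_minus_sym. auto.
  - intros x Heq.
    set (delta_x := go_indicator _ (singleton_oscillating x)).
    assert (Hone : ultra_point U delta_x = 1).
    { rewrite Heq. apply indicator_in. reflexivity. }
    assert (Hzero : ultra_point U delta_x = 0).
    { apply (ultra_limit_of_constant X U HU (proj1_sig delta_x) (fun y => y <> x)).
      - apply Hfree.
      - intros y Hy. apply indicator_out, Hy.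
      - apply ultra_point_converges, HU. }
    lra.
Qed.

End ProperMetricSpace.

Section LocallyFiniteGroup.
Variables (G : Type) (mul : G -> G -> G) (one : G) (inv : G -> G).
Hypothesis Hgrp : is_group mul one inv.
Hypothesis Hinf : infinite_set (fun _ : G => True).
Hypothesis Hlf : locally_finite mul one inv.
Variable d : G -> G -> R.
Hypothesis Hmet : is_metric d.
Hypothesis Hlinv : left_invariant mul d.
Hypothesis Hprop : proper_metric d.

Definition finite_enlargement (r : R) (P H : G -> Prop) : Prop :=
  is_subgroup mul one inv H /\ finite_set H /\ (forall y, P y -> H y) /\
  (forall y, d one y <= r -> H y) /\ exists z, H z /\ ~ P z.

(** Local finiteness applied to [P], the ball and a point outside [P]. *)
Lemma finite_enlargement_exists (r : R) (P : G -> Prop) :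
  finite_set P -> exists H, finite_enlargement r P H.
Proof.
  intros [lp Hp]. destruct (Hprop one r) as [lb Hb].
  destruct (classic (exists z, ~ P z)) as [[z Hz] | Hall].
  2: { exfalso. apply Hinf. exists lp. intros z _. apply Hp.
       apply NNPP. intros Hz. apply Hall. exists z; exact Hz. }
  destruct (Hlf (lp ++ lb ++ z :: nil)) as [H [Hsub [Hfin Hin]]].
  exists H. split; [exact Hsub | split; [exact Hfin | split; [| split]]].
  - intros y Py. apply Hin, in_or_app. left; apply Hp, Py.
  - intros y Hy. apply Hin, in_or_app. right; apply in_or_app. left; apply Hb, Hy.
  - exists z. split; [| exact Hz].
    apply Hin, in_or_app. right; apply in_or_app. right; left; reflexivity.
Qed.

Definition subgroup_exhaustion (Hs : nat -> G -> Prop) : Prop :=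
  (forall j, is_subgroup mul one inv (Hs j)) /\ (forall j, finite_set (Hs j)) /\
  (forall j y, d one y <= INR j -> Hs j y) /\
  (forall j y, Hs j y -> Hs (S j) y) /\ (forall j, exists z, Hs (S j) z /\ ~ Hs j z).

Lemma subgroup_exhaustion_exists : exists Hs, subgroup_exhaustion Hs.
Proof.
  assert (next : forall (k : nat) (P : G -> Prop),
             {H | finite_set P -> finite_enlargement (INR k) P H}).
  { intros k P. apply constructive_indefinite_description.
    destruct (classic (finite_set P)) as [HP | HP].
    - destruct (finite_enlargement_exists (INR k) P HP) as [H HH]. exists H; auto.
    - exists P; contradiction. }
  set (Hs := fix Hs (j : nat) : G -> Prop :=
         match j with
         | O => proj1_sig (next O (fun _ => False))
         | S j' => proj1_sig (next j (Hs j'))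
         end).
  assert (Hstep : forall j, finite_enlargement (INR j)
                    (match j with O => fun _ => False | S j' => Hs j' end) (Hs j)).
  { induction j as [| j IH].
    - apply (proj2_sig (next O (fun _ => False))). exists nil; tauto.
    - destruct IH as [_ [Hfin _]]. exact (proj2_sig (next (S j) (Hs j)) Hfin). }
  exists Hs. split; [| split; [| split; [| split]]]; intros j.
  - apply (Hstep j).
  - apply (Hstep j).
  - apply (Hstep j).
  - apply (Hstep (S j)).
  - apply (Hstep (S j)).
Qed.

Section Sectors.
Variable Hs : nat -> G -> Prop.
Hypothesis Hex : subgroup_exhaustion Hs.

Lemma exhaustion_mono (a b : nat) : (a <= b)%nat -> forall y, Hs a y -> Hs b y.
Proof.
  intros Hab. induction Hab as [| b Hab IH]; auto.
  intros y Hy. apply (proj1 (proj2 (proj2 (proj2 Hex)))), IH, Hy.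
Qed.

Definition layer (j : nat) (x : G) : Prop := Hs (S j) x /\ ~ Hs j x.

Lemma layer_unique (j j' : nat) (x : G) : layer j x -> layer j' x -> j = j'.
Proof.
  intros [Hx1 Hx2] [Hx1' Hx2'].
  destruct (Nat.lt_trichotomy j j') as [h | [h | h]]; auto; exfalso.
  - apply Hx2'. apply (exhaustion_mono (S j)); auto.
  - apply Hx2. apply (exhaustion_mono (S j')); auto.
Qed.

(** The key step: if [x] lies outside [Hs m] and [d x y <= m], then
    [y = x h] with [h = x^-1 y] in [Hs m <= Hs j], so [y] stays in the layer
    [j] of [x] (the layers are unions of left cosets of [Hs j]). *)
Lemma layer_link (m j : nat) (x y : G) :
  ~ Hs m x -> d x y <= INR m -> layer j x -> layer j y.
Proof.
  intros Hx Hd [Hx1 Hx2].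
  destruct Hgrp as [assoc [lid [rid [linv rinv]]]].
  destruct Hex as [Hsub [_ [Hball _]]].
  set (h := mul (inv x) y).
  assert (Ey : mul x h = y) by (unfold h; rewrite assoc, rinv, lid; reflexivity).
  assert (Ex : mul y (inv h) = x) by (rewrite <- Ey, <- assoc, rinv, rid; reflexivity).
  assert (Hh : Hs m h).
  { apply Hball. rewrite <- (Hlinv x one h), rid, Ey. exact Hd. }
  assert (Hmj : (m <= j)%nat).
  { destruct (Nat.le_gt_cases m j) as [l | l]; auto. exfalso; apply Hx.
    apply (exhaustion_mono (S j)); auto. }
  assert (Hhj : Hs j h) by (apply (exhaustion_mono m); auto).
  destruct (Hsub j) as [_ [Hmul_j Hinv_j]]. destruct (Hsub (S j)) as [_ [Hmul_Sj _]].
  split.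
  - rewrite <- Ey. apply Hmul_Sj; auto. apply (exhaustion_mono j); auto.
  - intros Hy. apply Hx2. rewrite <- Ex. auto.
Qed.

Definition sector (k : nat) (x : G) : Prop := exists j, layer j x /\ fst (of_nat j) = k.

Lemma sector_disjoint (k l : nat) (y : G) : sector k y -> sector l y -> k = l.
Proof.
  intros [j [Hj Hjk]] [j' [Hj' Hjl]]. rewrite (layer_unique _ _ _ Hj Hj') in Hjk. congruence.
Qed.

(** Each sector is infinite: it meets the infinitely many non-empty layers
    [to_nat (k, t)]. *)
Lemma sector_infinite (k : nat) : infinite_set (sector k).
Proof.
  assert (Hne : forall j, exists z, layer j z) by apply Hex.
  set (pick j := proj1_sig (constructive_indefinite_description _ (Hne j))).
  assert (Hpick : forall j, layer j (pick j))
    by (intros j; exact (proj2_sig (constructive_indefinite_description _ (Hne j)))).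
  apply (infinite_of_injection G (sector k) (fun t => pick (to_nat (k, t)))).
  - intros t. exists (to_nat (k, t)). rewrite cancel_of_to. auto.
  - intros t t' Heq. pose proof (Hpick (to_nat (k, t))) as H1.
    pose proof (Hpick (to_nat (k, t'))) as H2. rewrite Heq in H1.
    pose proof (to_nat_inj _ _ (layer_unique _ _ _ H1 H2)). congruence.
Qed.

(** Sectors are unions of layers, so their indicators are glacially
    oscillating for the scale [(Hs i, i)]. *)
Lemma sector_oscillating (k : nat) : glacially_oscillating d (indicator (sector k)).
Proof.
  destruct Hex as [_ [Hfin [Hball _]]].
  apply (link_invariant_oscillating G d Hs (fun i => i)).
  - apply (balls_glacial_scale G d Hmet one); [| exact Hball].
    intros i. apply (finite_bounded G d Hmet one), Hfin.
  - intros a b [m [Ha [Hb Hd]]].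
    assert (Hiff : sector k a <-> sector k b).
    { destruct Hmet as [_ [_ [Hsym _]]].
      split; intros [j [Hj Hjk]]; exists j; split; auto.
      - apply (layer_link m j a b); auto.
      - apply (layer_link m j b a); auto. rewrite Hsym; auto. }
    unfold indicator.
    destruct excluded_middle_informative, excluded_middle_informative; tauto.
Qed.

Definition sector_ultrafilter (k : nat) : (G -> Prop) -> Prop :=
  epsilon (inhabits (fun _ => True))
    (fun U => is_ultrafilter U /\ U (sector k) /\ forall x, U (fun y => y <> x)).

Lemma sector_ultrafilter_spec (k : nat) :
  is_ultrafilter (sector_ultrafilter k) /\ sector_ultrafilter k (sector k) /\
  forall x, sector_ultrafilter k (fun y => y <> x).
Proof. unfold sector_ultrafilter. apply epsilon_spec, (free_ultrafilter_on G), sector_infinite. Qed.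

Definition sector_end (k : nat) : GOfun d -> R := ultra_point G d (sector_ultrafilter k).

Lemma sector_end_remainder (k : nat) : CF_remainder d (sector_end k).
Proof.
  destruct (sector_ultrafilter_spec k) as [HU [_ Hfree]].
  exact (free_ultra_point_remainder G d Hmet Hprop _ HU Hfree).
Qed.

(** [sector_end k] takes the value [1] on the indicator of sector [k] and [0]
    on the indicators of the other sectors, so distinct sectors give distinct
    ends. *)
Lemma sector_end_injective (k l : nat) : sector_end k = sector_end l -> k = l.
Proof.
  intros Heq.
  set (one_k := go_indicator G d Hmet Hprop (sector k) (sector_oscillating k)).
  assert (Hvalue : forall i c, (forall y, sector i y -> indicator (sector k) y = c) ->
                     sector_end i one_k = c).
  { intros i c Hc. destruct (sector_ultrafilter_spec i) as [HU [Hsec _]].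
    apply (ultra_limit_of_constant G _ HU (indicator (sector k)) (sector i)); auto.
    exact (proj2 (ultra_point_converges G d _ one_k HU)). }
  assert (Hk : sector_end k one_k = 1) by (apply Hvalue; intros y; apply indicator_in).
  destruct (Nat.eq_dec k l) as [| Hne]; auto. exfalso.
  assert (Hl : sector_end l one_k = 0).
  { apply Hvalue. intros y Hy. apply indicator_out. intros Hy'.
    apply Hne, (sector_disjoint k l y); auto. }
  rewrite Heq in Hk. lra.
Qed.

End Sectors.
End LocallyFiniteGroup.

Theorem proposition5p6 (G : Type) (mul : G -> G -> G) (one : G) (inv : G -> G)
  (Hgrp : is_group mul one inv)
  (Hcount : countable_type G)
  (Hinf : infinite_set (fun _ : G => True))
  (Hlf : locally_finite mul one inv)
  (d : G -> G -> R)
  (Hmet : is_metric d) (Hlinv : left_invariant mul d) (Hprop : proper_metric d) :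
  infinitely_many_ends d.
Proof.
  destruct (subgroup_exhaustion_exists G mul one inv Hinf Hlf d Hprop) as [Hs Hex].
  apply (infinite_of_injection _ _ (sector_end G d Hs)).
  - exact (sector_end_remainder G mul one inv d Hmet Hprop Hs Hex).
  - apply (sector_end_injective G mul one inv Hgrp d Hmet Hlinv Hprop Hs Hex).
Qed.
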